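(* Let $V$ and $\mathcal{N}_7^V$ be as follows: $V:\mathbb{C}^7\to\mathbb{C}^3\otimes\mathbb{C}^3$ is any isometry whose range is the orthogonal complement of $\operatorname{span}\{\ket{\phi_3^+},\ket{0}\otimes\ket{1}\}$ with $\ket{\phi_3^+}=\frac1{\sqrt3}\sum_{k=0}^2\ket{kk}$, and $\mathcal{N}_7^V(\rho)=\operatorname{Tr}_E(V\rho V^\dagger)$. Then for every $d\in\mathbb{N}$, $n\in\mathbb{N}$ and $M\in\mathcal{P}^{n\to n}(\mathcal{Q}_d)$ one has $\operatorname{Tr}M\le d$, so $\mathcal{F}_c(\mathcal{Q}_6)=6$; and $$\mathcal{F}_c^{\min}(\mathcal{N}_7^V)\ \ge\ \tfrac{20}{3}\ >\ 6=\mathcal{F}_c(\mathcal{Q}_6).$$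
   Context: $\mathcal{P}^{n\to m}(\mathcal{N}(\mathcal{Q}_{d_A}))$ is the set of $n\times m$ matrices $P_{ij}=\operatorname{Tr}[\Lambda_j\mathcal{N}(\rho_i)]$ with $\rho_i$ density matrices on the input space and $\{\Lambda_j\}$ a POVM on the output space; $\mathcal{P}^{n\to m}(\mathcal{Q}_d)$ is this set for the identity channel on $\mathcal{L}(\mathbb{C}^d)$. The classical transmission fidelity of a channel $\mathcal{N}$ is $\mathcal{F}_c(\mathcal{N})=\sup_{n\in\mathbb{N}}\sup_{P\in\mathcal{P}^{n\to n}(\mathcal{N}(\mathcal{Q}_{d_A}))}\operatorname{Tr}P$. For a channel with isometry $V:\mathbb{C}^{d_A}\to\mathbb{C}^{d_B}\otimes\mathbb{C}^{d_E}$, $\mathcal{P}^{n\to m}_{\min}(\mathcal{N},V)$ is the set of matrices $P_{ij}=\sum_{l,k}q(j\mid l,k)\operatorname{Tr}[(\Lambda^B_l\otimes\Lambda^E_k)V\rho_iV^\dagger]$ with independent finite-outcome POVMs $\{\Lambda^B_l\}$ on $\mathbb{C}^{d_B}$, $\{\Lambda^E_k\}$ on $\mathbb{C}^{d_E}$ and stochastic post-processing $q$; and $\mathcal{F}_c^{\min}(\mathcal{N})=\sup_n\sup_{P\in\mathcal{P}^{n\to n}_{\min}(\mathcal{N},V)}\operatorname{Tr}P$. *)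

From HB Require Import structures.
From mathcomp Require Import all_boot all_order all_algebra.
From mathcomp Require Import all_classical all_reals.
From mathcomp Require Import ereal.
From mathcomp Require Import complex mxtens.

Set Implicit Arguments.
Unset Strict Implicit.
Unset Printing Implicit Defensive.

Import Order.TTheory GRing.Theory Num.Theory.
Local Open Scope ring_scope.
Local Open Scope classical_set_scope.

Section Quantum.
Variable R : realType.
Local Notation C := R[i].

Definition adj {m n} (A : 'M[C]_(m, n)) : 'M[C]_(n, m) := map_mx (@conjc R) A^T.

(* positive semidefinite: <x|A|x> >= 0 (real and nonnegative) for all x *)
Definition psd {d} (A : 'M[C]_d) : Prop :=
  forall x : 'cV[C]_d, 0 <= (adj x *m A *m x) 0 0.

Definition density {d} (rho : 'M[C]_d) : Prop := psd rho /\ \tr rho = 1.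

Definition POVM {d m} (L : 'I_m -> 'M[C]_d) : Prop :=
  (forall j, psd (L j)) /\ \sum_(j < m) L j = 1%:M.

Definition isometry_mx {dA dO} (V : 'M[C]_(dO, dA)) : Prop := adj V *m V = 1%:M.

Definition ptraceE {dB dE} (X : 'M[C]_(dB * dE)) : 'M[C]_dB :=
  \matrix_(i, j) \sum_(k < dE) X (mxtens_index (i, k)) (mxtens_index (j, k)).

Definition chan_of_iso {dA dB dE} (V : 'M[C]_(dB * dE, dA)) (rho : 'M[C]_dA)
  : 'M[C]_dB := ptraceE (V *m rho *m adj V).

Definition idch d : 'M[C]_d -> 'M[C]_d := id.

Definition Pset {dA dB} (N : 'M[C]_dA -> 'M[C]_dB) n m (P : 'M[C]_(n, m)) : Prop :=
  exists (rho : 'I_n -> 'M[C]_dA) (L : 'I_m -> 'M[C]_dB),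
    (forall i, density (rho i)) /\ POVM L /\
    P = \matrix_(i, j) \tr (L j *m N (rho i)).

(* classical transmission fidelity F_c(N) (trace of P is real; we take Re) *)
Definition Fc {dA dB} (N : 'M[C]_dA -> 'M[C]_dB) : \bar R :=
  ereal_sup [set x | exists (n : nat) (P : 'M[C]_(n, n)), Pset N P /\ x = (complex.Re (\tr P))%:E].

Definition Pmin {dA dB dE} (V : 'M[C]_(dB * dE, dA)) n m (P : 'M[C]_(n, m)) : Prop :=
  exists (rho : 'I_n -> 'M[C]_dA) (a b : nat)
         (LB : 'I_a -> 'M[C]_dB) (LE : 'I_b -> 'M[C]_dE)
         (q : 'I_m -> 'I_a -> 'I_b -> R),
    (forall i, density (rho i)) /\ POVM LB /\ POVM LE /\
    (forall j l k, 0 <= q j l k) /\ (forall l k, \sum_(j < m) q j l k = 1) /\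
    P = \matrix_(i, j) \sum_(l < a) \sum_(k < b)
          (q j l k)%:C%C * \tr ((LB l *t LE k) *m (V *m rho i *m adj V)).

Definition Fcmin {dA dB dE} (V : 'M[C]_(dB * dE, dA)) : \bar R :=
  ereal_sup [set x | exists (n : nat) (P : 'M[C]_(n, n)), Pmin V P /\ x = (complex.Re (\tr P))%:E].

Definition ket {d} (i : 'I_d) : 'cV[C]_d := delta_mx i 0.

Definition phi3 : 'M[C]_(3 * 3, 1 * 1) :=
  ((Num.sqrt (3 : R))^-1)%:C%C *: \sum_(k < 3) (ket k *t ket k).

Definition ket01 : 'M[C]_(3 * 3, 1 * 1) := ket (inord 0 : 'I_3) *t ket (inord 1 : 'I_3).

Definition range_N7 (V : 'M[C]_(3 * 3, 7)) : Prop :=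
  forall x : 'cV[C]_(3 * 3),
    (exists y : 'cV[C]_7, x = V *m y) <->
    (adj phi3 *m x = 0 /\ adj ket01 *m x = 0).

End Quantum.

(* The bound Tr M <= d for the identity channel comes from
   Tr (L rho) <= Tr L * Tr rho for positive semidefinite L and rho, which
   follows entrywise from the 2x2 principal minors and AM-GM; summing over
   the POVM gives Tr (sum_j L_j) = d.  For N_7^V, seven states in the range
   of V are sent, and Bob and Eve both measure in the computational basis:
   the product states |02>, |10>, |12>, |20>, |21> are decoded with
   certainty, (2|00> - |11> - |22>)/sqrt 6 is recognised from outcome 00 with
   probability 2/3, and (|11> - |22>)/sqrt 2 from outcomes 11 and 22 with
   probability 1, for a total score of 5 + 2/3 + 1 = 20/3. *)
From HB Require Import structures.
From mathcomp Require Import all_boot all_order all_algebra.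
From mathcomp Require Import all_classical all_reals.
From mathcomp Require Import ereal.
From mathcomp Require Import complex mxtens.
From mathcomp Require Import lra.
Import Order.TTheory GRing.Theory Num.Theory.
Local Open Scope ring_scope.

Section Adjoint.
Variable R : realType.
Local Notation C := R[i].

Lemma adjE m n (A : 'M[C]_(m, n)) i j : adj A i j = (A j i)^*%C.
Proof. by rewrite !mxE. Qed.

Lemma adjK m n (A : 'M[C]_(m, n)) : adj (adj A) = A.
Proof. by apply/matrixP=> i j; rewrite !mxE conjcK. Qed.

Lemma adjM m n p (A : 'M[C]_(m, n)) (B : 'M[C]_(n, p)) :
  adj (A *m B) = adj B *m adj A.
Proof. by rewrite /adj trmx_mul map_mxM. Qed.

Lemma adjD m n (A B : 'M[C]_(m, n)) : adj (A + B) = adj A + adj B.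
Proof. by apply/matrixP=> i j; rewrite !mxE rmorphD. Qed.

Lemma adjZ m n a (A : 'M[C]_(m, n)) : adj (a *: A) = a^*%C *: adj A.
Proof. by apply/matrixP=> i j; rewrite !mxE rmorphM. Qed.

Lemma adj_sum m n I (r : seq I) P (F : I -> 'M[C]_(m, n)) :
  adj (\sum_(i <- r | P i) F i) = \sum_(i <- r | P i) adj (F i).
Proof. by apply: (big_morph _ (@adjD m n)); apply/matrixP=> i j; rewrite !mxE conjc0. Qed.

Lemma adj_delta m n (i : 'I_m) (j : 'I_n) :
  adj (delta_mx i j : 'M[C]_(m, n)) = delta_mx j i.
Proof. by apply/matrixP=> a b; rewrite !mxE andbC; apply: conjc_nat. Qed.

Lemma adj_tens m n p q (A : 'M[C]_(m, n)) (B : 'M[C]_(p, q)) :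
  adj (A *t B) = adj A *t adj B.
Proof. by apply/matrixP=> i j; rewrite !mxE rmorphM. Qed.

End Adjoint.

Lemma sum_mxtens_index (V : nmodType) m n (F : 'I_(m * n) -> V) :
  \sum_p F p = \sum_(a < m) \sum_(b < n) F (mxtens_index (a, b)).
Proof.
rewrite pair_bigA /= (reindex (@mxtens_index m n)) /=; first by apply: eq_bigr => -[].
by exists (@mxtens_unindex m n) => x _; [exact: mxtens_indexK | exact: mxtens_unindexK].
Qed.

Lemma tens_delta (T : pzRingType) m n p q (i : 'I_m) (j : 'I_n) (k : 'I_p) (l : 'I_q) :
  (delta_mx i j : 'M[T]_(m, n)) *t (delta_mx k l : 'M[T]_(p, q)) =
  delta_mx (mxtens_index (i, k)) (mxtens_index (j, l)).
Proof.
have idx_eq m' n' (x y : 'I_m' * 'I_n') :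
    (mxtens_index x == mxtens_index y) = (x == y).
  exact: (inj_eq (can_inj (@mxtens_indexK m' n'))).
apply/matrixP=> x y; case: (mxtens_indexP x) => a b; case: (mxtens_indexP y) => c e.
rewrite tensmxE !mxE !idx_eq !xpair_eqE.
by do 4 case: (_ == _); rewrite /= ?mulr1 ?mulr0.
Qed.

Section PositiveSemidefinite.
Variable R : realType.
Local Notation C := R[i].
Local Notation Re := (@complex.Re R).
Local Notation Im := (@complex.Im R).

Lemma Re_sum I (r : seq I) P (F : I -> C) :
  Re (\sum_(i <- r | P i) F i) = \sum_(i <- r | P i) Re (F i).
Proof. exact: (@raddf_sum _ _ (Re : Rcomplex R -> R)). Qed.

Lemma Im_sum I (r : seq I) P (F : I -> C) :
  Im (\sum_(i <- r | P i) F i) = \sum_(i <- r | P i) Im (F i).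
Proof. exact: (@raddf_sum _ _ (Im : Rcomplex R -> R)). Qed.

Lemma psd_form2 d (A : 'M[C]_d) a b (x y : C) : psd A ->
  0 <= x^*%C * x * A a a + x^*%C * y * A a b + y^*%C * x * A b a + y^*%C * y * A b b.
Proof.
have form_delta i j : (delta_mx 0 i *m A *m delta_mx j 0 : 'M[C]_1) = const_mx (A i j).
  by apply/matrixP=> u v; rewrite !ord1 -rowE -colE !mxE.
move/(_ (x *: delta_mx a 0 + y *: delta_mx b 0)).
rewrite adjD !adjZ !adj_delta !mulmxDl !mulmxDr -!scalemxAl -!scalemxAr.
by rewrite !form_delta !mxE !mulrA !addrA.
Qed.

(* p, s, t, q are the entries of the 2x2 matrix of the form, read row by row. *)
Lemma form2_ge0_minor (p q s t : C) :
  (forall x y : C, 0 <= x^*%C * x * p + x^*%C * y * s + y^*%C * x * t + y^*%C * y * q) ->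
  [/\ Im p = 0, 0 <= Re p, t = s^*%C & Re s ^+ 2 + Im s ^+ 2 <= Re p * Re q].
Proof.
case: p => p1 p2; case: q => q1 q2; case: s => s1 s2; case: t => t1 t2 /= H.
have := H 1 0; have := H 0 1; have := H 1 1; have := H 1 'i%C.
rewrite !lecE /= => /andP[/eqP E1 L1] /andP[/eqP E2 L2] /andP[/eqP E3 L3] /andP[/eqP E4 L4].
have p20 : p2 = 0 by lra.
have q20 : q2 = 0 by lra.
have ts1 : t1 = s1 by lra.
have ts2 : t2 = - s2 by lra.
split=> //; [lra | by rewrite ts1 ts2 |].
(* testing against x = m and y = - conj s gives a quadratic in m that stays nonnegative *)
have Hm (m : R) :
    0 <= m ^+ 2 * p1 - 2 * m * (s1 ^+ 2 + s2 ^+ 2) + (s1 ^+ 2 + s2 ^+ 2) * q1.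
  have := H (m +i* 0)%C ((- s1) +i* s2)%C.
  by rewrite lecE /= => /andP[_]; rewrite p20 q20 ts1 ts2 => ?; nra.
have [q0|q_gt0] : q1 = 0 \/ 0 < q1 by lra.
  rewrite q0 mulr0 leNgt; apply/negP => s_gt0.
  have := Hm ((s1 ^+ 2 + s2 ^+ 2) / (p1 + 1)); set m := (_ / _).
  have hm : m * (p1 + 1) = s1 ^+ 2 + s2 ^+ 2 by rewrite /m mulfVK //; lra.
  have m_gt0 : 0 < m by rewrite /m divr_gt0 //; lra.
  by rewrite q0; nra.
by have := Hm q1; nra.
Qed.

Lemma psd_entries d (A : 'M[C]_d) a b : psd A ->
  [/\ Im (A a a) = 0, 0 <= Re (A a a), A b a = (A a b)^*%C &
      Re (A a b) ^+ 2 + Im (A a b) ^+ 2 <= Re (A a a) * Re (A b b)].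
Proof. by move=> psdA; apply: form2_ge0_minor => x y; apply: psd_form2. Qed.
Arguments psd_entries {d A} a b.

Lemma cauchy_schwarz_am_gm {s t u v p q P Q : R} :
  0 <= p -> 0 <= q -> 0 <= P -> 0 <= Q ->
  s ^+ 2 + t ^+ 2 <= p * q -> u ^+ 2 + v ^+ 2 <= P * Q ->
  s * u + t * v <= (p * Q + q * P) / 2.
Proof.
move=> p_ge0 q_ge0 P_ge0 Q_ge0 st_le uv_le.
have cs : (s * u + t * v) ^+ 2 <= (s ^+ 2 + t ^+ 2) * (u ^+ 2 + v ^+ 2).
  by have := sqr_ge0 (s * v - t * u); nra.
have prod_le : (s ^+ 2 + t ^+ 2) * (u ^+ 2 + v ^+ 2) <= (p * q) * (P * Q).
  by apply: ler_pM => //; nra.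
have am_gm : (p * q) * (P * Q) <= ((p * Q + q * P) / 2) ^+ 2.
  by have := sqr_ge0 (p * Q - q * P); nra.
have : 0 <= (p * Q + q * P) / 2 by nra.
nra.
Qed.

Lemma tr_psd_mul d (L rho : 'M[C]_d) : psd L -> psd rho ->
  Im (\tr (L *m rho)) = 0 /\ Re (\tr (L *m rho)) <= Re (\tr L) * Re (\tr rho).
Proof.
move=> psdL psd_rho.
have -> : \tr (L *m rho) = \sum_a \sum_b L a b * rho b a.
  by apply: eq_bigr => a _; rewrite mxE.
split.
  (* the (a, b) and (b, a) terms are complex conjugates of each other *)
  rewrite Im_sum; under eq_bigr do rewrite Im_sum.
  set S := (X in X = 0); suff : S = - S by lra.
  rewrite {1}/S exchange_big /= -sumrN; apply: eq_bigr => a _.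
  rewrite -sumrN; apply: eq_bigr => b _.
  have [_ _ -> _] := psd_entries b a psdL; have [_ _ -> _] := psd_entries a b psd_rho.
  by case: (L b a) => x y; case: (rho a b) => z w /=; lra.
pose p a := Re (L a a); pose q a := Re (rho a a).
have -> : Re (\tr L) * Re (\tr rho) = \sum_a \sum_b ((p a * q b + p b * q a) / 2).
  have pq_sum : \sum_a \sum_b p a * q b = Re (\tr L) * Re (\tr rho).
    by rewrite /mxtrace !Re_sum mulr_suml; apply: eq_bigr => a _; rewrite mulr_sumr.
  under eq_bigr do rewrite -mulr_suml big_split /=.
  rewrite -mulr_suml big_split /= [X in _ + X]exchange_big pq_sum.
  lra.
rewrite Re_sum; apply: ler_sum => a _; rewrite Re_sum; apply: ler_sum => b _.
have [_ La _ Lm] := psd_entries a b psdL; have [_ Lb _ _] := psd_entries b a psdL.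
have [_ ra rba rm] := psd_entries a b psd_rho; have [_ rb _ _] := psd_entries b a psd_rho.
rewrite rba; move: Lm rm; case: (L a b) => s t; case: (rho a b) => u v /= Lm rm.
by have := cauchy_schwarz_am_gm La Lb ra rb Lm rm; rewrite /p /q; lra.
Qed.

End PositiveSemidefinite.
Arguments psd_entries {R d A} a b.
Arguments tr_psd_mul {R d L rho}.

Section IdentityChannel.
Variable R : realType.
Local Notation C := R[i].

Lemma psd_delta d (i : 'I_d) : psd (delta_mx i i : 'M[C]_d).
Proof.
move=> x; rewrite -(mul_delta_mx (0 : 'I_1)) mulmxA -colE -mulmxA -rowE.
by rewrite mxE big_ord1 !mxE mulrC; apply: mulcJ_ge0.
Qed.

Lemma tr_delta_mul d (i : 'I_d) (A : 'M[C]_d) : \tr (delta_mx i i *m A) = A i i.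
Proof.
by rewrite -(mul_delta_mx (0 : 'I_1)) -mulmxA mxtrace_mulC -rowE -colE /mxtrace big_ord1 !mxE.
Qed.

Lemma density_delta d (i : 'I_d) : density (delta_mx i i : 'M[C]_d).
Proof. by split; [apply: psd_delta | rewrite -[delta_mx _ _]mulmx1 tr_delta_mul mxE eqxx]. Qed.

Lemma POVM_delta d : POVM (fun j : 'I_d => delta_mx j j : 'M[C]_d).
Proof.
split; first exact: psd_delta.
apply/matrixP=> a b; rewrite summxE (bigD1 a) //= big1 => [|j /negbTE ja].
  by rewrite !mxE eqxx addr0 eq_sym.
by rewrite mxE eq_sym ja.
Qed.

Lemma Pset_idch_tr_le {d n} {M : 'M[C]_n} : Pset (@idch R d) M -> \tr M <= d%:R.
Proof.
case=> rho [L [rho_density [[psdL sumL] ->]]].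
have -> : \tr (\matrix_(i, j) \tr (L j *m idch (rho i))) = \sum_i \tr (L i *m rho i).
  by apply: eq_bigr => i _; rewrite mxE.
have <- : \sum_i \tr (L i) = d%:R :> C by rewrite -raddf_sum sumL /= mxtrace1.
apply: ler_sum => i _; have [Im0 Re_le] := tr_psd_mul (psdL i) (rho_density i).1.
rewrite lecE Im0 Im_sum big1 ?eqxx => [/=|a _]; last by have [] := psd_entries a a (psdL i).
by rewrite (rho_density i).2 mulr1 in Re_le.
Qed.

Lemma Fc_idch d : Fc (@idch R d) = (d%:R)%:E.
Proof.
apply/le_anti/andP; split.
  apply: ge_ereal_sup => _ [n [P [PP ->]]]; rewrite lee_fin.
  by move: (Pset_idch_tr_le PP); rewrite -[d%:R](rmorph_nat (real_complex R)) lecE => /andP[].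
apply: ereal_sup_ubound; exists d.
exists (\matrix_(i, j) \tr ((delta_mx j j : 'M[C]_d) *m idch (delta_mx i i))).
split.
  exists (fun i => delta_mx i i), (fun j => delta_mx j j).
  by split; [move=> i; apply: density_delta | split; last by []; apply: POVM_delta].
rewrite [\tr (\matrix_(i, j) _)](_ : _ = \sum_(i < d) 1); last first.
  by apply: eq_bigr => i _; rewrite mxE /idch tr_delta_mul mxE !eqxx.
by rewrite sumr_const card_ord -(rmorph_nat (real_complex R)).
Qed.

End IdentityChannel.

Section PureStates.
Variable R : realType.
Local Notation C := R[i].

Lemma pure_state_of_range m n (V : 'M[C]_(m, n)) (u : 'cV[C]_m) (y : 'cV[C]_n) (k : R) :
  isometry_mx V -> u = V *m y -> (adj u *m u) 0 0 = k%:C%C -> 0 < k ->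
  density ((k^-1)%:C%C *: (y *m adj y)) /\
  V *m ((k^-1)%:C%C *: (y *m adj y)) *m adj V = (k^-1)%:C%C *: (u *m adj u).
Proof.
move=> isoV -> norm_u k_gt0.
have norm_y : (adj y *m y) 0 0 = k%:C%C.
  by rewrite -norm_u adjM mulmxA -(mulmxA (adj y)) isoV mulmx1.
split; last by rewrite -scalemxAr -scalemxAl adjM !mulmxA.
split.
  move=> x; rewrite -scalemxAr -scalemxAl mxE !mulmxA -(mulmxA (adj x *m y)).
  rewrite mxE big_ord1 -[adj y *m x]adjK adjM adjK adjE.
  by apply: mulr_ge0; [rewrite ler0c invr_ge0 ltW | apply: mulcJ_ge0].
rewrite linearZ /= mxtrace_mulC /mxtrace big_ord1 norm_y -rmorphM /= mulVf //.
by rewrite gt_eqF.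
Qed.

End PureStates.

Section SevenStateCode.
Variable R : realType.
Local Notation C := R[i].
Local Notation Re := (@complex.Re R).

(* Coordinates in the basis |ab> of the seven unnormalised signals, in the
   order listed above.  None has a |01> component and each has zero diagonal
   sum, so all are orthogonal to |01> and |phi_3^+>. *)
Definition signal_coef (j a b : nat) : R :=
  match j, a, b with
  | 0, 0, 2 | 1, 1, 0 | 2, 1, 2 | 3, 2, 0 | 4, 2, 1 => 1
  | 5, 0, 0 => 2 | 5, 1, 1 => -1 | 5, 2, 2 => -1
  | 6, 1, 1 => 1 | 6, 2, 2 => -1
  | _, _, _ => 0
  end.

Definition signal (j : nat) : 'cV[C]_(3 * 3) :=
  \col_p (signal_coef j (mxtens_unindex p).1 (mxtens_unindex p).2)%:C%C.

Definition signal_norm2 (j : nat) : R := \sum_(a < 3) \sum_(b < 3) signal_coef j a b ^+ 2.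

Lemma signal_tens j (a b : 'I_3) : signal j (mxtens_index (a, b)) 0 = (signal_coef j a b)%:C%C.
Proof. by rewrite mxE mxtens_indexK. Qed.

Lemma signal_normE j : (adj (signal j) *m signal j) 0 0 = (signal_norm2 j)%:C%C.
Proof.
rewrite mxE sum_mxtens_index /signal_norm2 rmorph_sum; apply: eq_bigr => a _.
rewrite rmorph_sum; apply: eq_bigr => b _.
by rewrite adjE signal_tens conjc_real -rmorphM expr2.
Qed.

Lemma signal_norm2_gt0 (j : 'I_7) : 0 < signal_norm2 j.
Proof.
rewrite /signal_norm2 !big_ord_recr !big_ord0 /=.
by case: j => [[|[|[|[|[|[|[|j]]]]]]]] //= _; rewrite /signal_coef /= !expr2; lra.
Qed.

Lemma signal_in_range (V : 'M[C]_(3 * 3, 7)) (j : 'I_7) :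
  range_N7 V -> exists y, signal j = V *m y.
Proof.
have entry00 (u : 'M[C]_(1, 1)) : u 0 0 = 0 -> u = 0.
  by move=> u0; apply/matrixP=> a b; rewrite !ord1 u0 mxE.
have row_delta p (u : 'cV[C]_p) (r : 'I_1) q : (delta_mx r q *m u) 0 0 = u q 0.
  by rewrite (ord1 r) -rowE mxE.
move=> rangeV; apply/rangeV; split; apply: entry00.
  rewrite /phi3 adjZ adj_sum -scalemxAl mxE mulmx_suml summxE.
  rewrite (eq_bigr (fun k : 'I_3 => (signal_coef j k k)%:C%C)); last first.
    by move=> k _; rewrite adj_tens /ket adj_delta tens_delta row_delta signal_tens.
  rewrite -rmorph_sum; suff -> : \sum_(k < 3) signal_coef j k k = 0 by rewrite mulr0.
  rewrite !big_ord_recr big_ord0 /=.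
  by case: j => [[|[|[|[|[|[|[|j]]]]]]]] //= _; rewrite /signal_coef /=; lra.
rewrite /ket01 adj_tens /ket !adj_delta tens_delta row_delta signal_tens !inordK //.
by case: j => [[|[|[|[|[|[|[|j]]]]]]]].
Qed.

(* Bob's outcome a and Eve's outcome b are decoded as the signal index. *)
Definition decode (a b : nat) : nat :=
  match a, b with
  | 1, 0 => 1 | 1, 2 => 2 | 2, 0 => 3 | 2, 1 => 4
  | 0, 0 => 5 | 1, 1 => 6 | 2, 2 => 6 | _, _ => 0
  end.

Lemma decode_lt a b : (decode a b < 7)%N.
Proof. by case: a => [|[|[|a]]]; case: b => [|[|[|b]]]. Qed.

Definition decode_prob (j : 'I_7) (a b : 'I_3) : R := ((j : nat) == decode a b)%:R.

Lemma decode_prob_sum (a b : 'I_3) : \sum_(j < 7) decode_prob j a b = 1.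
Proof.
rewrite (bigD1 (Ordinal (decode_lt a b))) //= /decode_prob eqxx big1 ?addr0 // => j ja.
by apply/eqP; rewrite pnatr_eq0 eqb0; apply: contra ja => /eqP ja; apply/eqP/val_inj.
Qed.

Lemma decode_success :
  \sum_(j < 7) \sum_(a < 3) \sum_(b < 3)
    decode_prob j a b * ((signal_norm2 j)^-1 * (signal_coef j a b * signal_coef j a b))
  = 20%:R / 3%:R.
Proof.
have n0 : signal_norm2 0 = 1 by rewrite /signal_norm2 !big_ord_recr !big_ord0 /= /signal_coef /=; lra.
have n1 : signal_norm2 1 = 1 by rewrite /signal_norm2 !big_ord_recr !big_ord0 /= /signal_coef /=; lra.
have n2 : signal_norm2 2 = 1 by rewrite /signal_norm2 !big_ord_recr !big_ord0 /= /signal_coef /=; lra.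
have n3 : signal_norm2 3 = 1 by rewrite /signal_norm2 !big_ord_recr !big_ord0 /= /signal_coef /=; lra.
have n4 : signal_norm2 4 = 1 by rewrite /signal_norm2 !big_ord_recr !big_ord0 /= /signal_coef /=; lra.
have n5 : signal_norm2 5 = 6 by rewrite /signal_norm2 !big_ord_recr !big_ord0 /= /signal_coef /= !expr2; lra.
have n6 : signal_norm2 6 = 2 by rewrite /signal_norm2 !big_ord_recr !big_ord0 /= /signal_coef /= !expr2; lra.
rewrite !big_ord_recr !big_ord0 /= /decode_prob /signal_coef /= n0 n1 n2 n3 n4 n5 n6.
lra.
Qed.

Lemma Fcmin_N7_ge (V : 'M[C]_(3 * 3, 7)) : isometry_mx V -> range_N7 V ->
  ((20%:R / 3%:R : R)%:E <= Fcmin V)%E.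
Proof.
move=> isoV rangeV.
have [y signalE] := boolp.choice (fun j : 'I_7 => signal_in_range V j rangeV).
pose rho (j : 'I_7) := ((signal_norm2 j)^-1)%:C%C *: (y j *m adj (y j)).
have rhoP (j : 'I_7) : density (rho j) /\
    V *m rho j *m adj V = ((signal_norm2 j)^-1)%:C%C *: (signal j *m adj (signal j)).
  exact: pure_state_of_range (signal_normE j) (signal_norm2_gt0 j).
pose B a := delta_mx a a : 'M[C]_3.
pose P := \matrix_(i, j) \sum_(a < 3) \sum_(b < 3)
  (decode_prob j a b)%:C%C * \tr ((B a *t B b) *m (V *m rho i *m adj V)).
have score : Re (\tr P) = 20%:R / 3%:R.
  rewrite -decode_success Re_sum; apply: eq_bigr => i _; rewrite mxE Re_sum.
  apply: eq_bigr => a _; rewrite Re_sum; apply: eq_bigr => b _.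
  rewrite tens_delta (rhoP i).2 -scalemxAr linearZ /= tr_delta_mul mxE big_ord1 adjE.
  by rewrite signal_tens conjc_real -!rmorphM.
rewrite -score; apply: ereal_sup_ubound; exists 7%N, P; split => //.
exists rho, 3%N, 3%N, B, B, decode_prob.
split; first by move=> i; case: (rhoP i).
do 2 (split; first exact: POVM_delta).
split; first by move=> j a b; rewrite ler0n.
by split; first exact: decode_prob_sum.
Qed.

End SevenStateCode.

Theorem proposition2 (R : realType) (V : 'M[R[i]]_(3 * 3, 7)) :
  isometry_mx V -> range_N7 V ->
  (forall (d n : nat) (M : 'M[R[i]]_(n, n)), Pset (@idch R d) M -> \tr M <= d%:R)
  /\ Fc (@idch R 6) = (6%:R)%:E
  /\ ((20%:R / 3%:R : R)%:E <= Fcmin V)%E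
  /\ ((20%:R / 3%:R : R)%:E > Fc (@idch R 6))%E.
Proof.
move=> isoV rangeV; split; first by move=> d n M; apply: Pset_idch_tr_le.
split; first exact: Fc_idch.
split; first exact: Fcmin_N7_ge.
by rewrite Fc_idch lte_fin; lra.
Qed.
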